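(* Let $I$ be a nontrivial real interval, let $n\ge 2$ be an integer, and let $g\colon I^{(n)}\to I$ be a function. The following assertions are equivalent: (i) $g$ is $n$-associative (in the sense defined in the context); (ii) $g_1\circ g=g$, and $g(\mathbf{x}\,g(\mathbf{y})\,\mathbf{z})=g(\mathbf{x}'\,g(\mathbf{y}')\,\mathbf{z}')$ for all strings $\mathbf{x},\mathbf{y},\mathbf{z},\mathbf{x}',\mathbf{y}',\mathbf{z}'$ over $I$ such that $\mathbf{x}\mathbf{y}\mathbf{z},\mathbf{x}'\mathbf{y}'\mathbf{z}'\in I^{(n)}$, $\mathbf{y},\mathbf{y}'\in I^{(n)}$, and $\mathbf{x}\mathbf{y}\mathbf{z}=\mathbf{x}'\mathbf{y}'\mathbf{z}'$; (iii) $g(\mathbf{x}\,g(\mathbf{y})\,\mathbf{z})=g(\mathbf{x}\mathbf{y}\mathbf{z})$ for all strings $\mathbf{x},\mathbf{y},\mathbf{z}$ over $I$ such that $\mathbf{x}\mathbf{y}\mathbf{z}\in I^{(n)}$ and $\mathbf{y}\in I^{(n)}$; (iv) $g_1\circ g=g$, and $g(g(\mathbf{x}_1)\cdots g(\mathbf{x}_n))=g(\mathbf{x}_1\cdots\mathbf{x}_n)$ for all $\mathbf{x}_1,\dots,\mathbf{x}_n\in I^{(n)}$.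
   Context: Tuples in $I^m$ are regarded as strings of length $m$ over $I$; concatenation of strings is written by juxtaposition; $\varepsilon$ is the empty string and $I^0=\{\varepsilon\}$. Let $A_n=\{m\in\mathbb{N}: m\equiv 1 \pmod{n-1}\}$ and $I^{(n)}=\bigcup_{m\in A_n}I^m$. For $g\colon I^{(n)}\to I$, $g_m$ denotes the restriction of $g$ to $I^m$. A function $f\colon I^n\to I$ is associative if $f(\mathbf{x}\,f(\mathbf{y})\,\mathbf{z})=f(\mathbf{x}'\,f(\mathbf{y}')\,\mathbf{z}')$ whenever $\mathbf{x}\mathbf{y}\mathbf{z},\mathbf{x}'\mathbf{y}'\mathbf{z}'\in I^{2n-1}$, $\mathbf{y},\mathbf{y}'\in I^n$ and $\mathbf{x}\mathbf{y}\mathbf{z}=\mathbf{x}'\mathbf{y}'\mathbf{z}'$. A function $g\colon I^{(n)}\to I$ is called $n$-associative if (a) $g_n$ is associative; (b) for every $m\in A_n$ with $m>n$ and all $x_1,\dots,x_m\in I$, $g_m(x_1\cdots x_m)=g_n(g_n(\cdots g_n(g_n(x_1\cdots x_n)x_{n+1}\cdots x_{2n-1})\cdots)x_{m-n+2}\cdots x_m)$; and (c) $g_1\circ g=g$ and $g(\mathbf{x}\,g_1(y)\,\mathbf{z})=g(\mathbf{x}y\mathbf{z})$ for all strings $\mathbf{x},\mathbf{z}$ and $y\in I$ with $\mathbf{x}y\mathbf{z}\in I^{(n)}$. *)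

From HB Require Import structures.
From mathcomp Require Import all_boot all_order all_algebra.
From mathcomp Require Import reals.
Set Implicit Arguments. Unset Strict Implicit. Unset Printing Implicit Defensive.
Import Order.TTheory GRing.Theory Num.Theory.
Local Open Scope ring_scope.

(* Strings over I are sequences of reals all lying in the interval I;
   concatenation is ++, a single letter a is [:: a]. *)

Section Defs.
Variable R : realType.

(* A_n = { m in N (N = positive integers) : m = 1 mod (n-1) } *)
Definition inA (n m : nat) : bool :=
  (0 < m)%N && (m %% n.-1 == 1 %% n.-1)%N.

Definition strI (I : interval R) (s : seq R) : bool := all (fun a => a \in I) s.

Definition inIn (I : interval R) (n : nat) (s : seq R) : bool :=
  strI I s && inA n (size s).

Definition nontrivial_itv (I : interval R) : Prop :=
  exists a b : R, [/\ a \in I, b \in I & a < b].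

(* g : I^(n) -> I, modelled as a total function on seq R mapping I^(n) into I *)
Definition maps_into (I : interval R) (n : nat) (g : seq R -> R) : Prop :=
  forall s, inIn I n s -> g s \in I.

Definition gn_assoc (I : interval R) (n : nat) (g : seq R -> R) : Prop :=
  forall x y z x' y' z' : seq R,
    strI I (x ++ y ++ z) -> size (x ++ y ++ z) = (2 * n - 1)%N ->
    size y = n -> size y' = n ->
    x ++ y ++ z = x' ++ y' ++ z' ->
    g (x ++ g y :: z) = g (x' ++ g y' :: z').

(* g_n(g_n(... g_n(g_n(x1..xn) x_{n+1}..x_{2n-1}) ...) x_{m-n+2}..x_m) *)
Definition nested_gn (n : nat) (g : seq R -> R) (s : seq R) : R :=
  foldl (fun acc c => g (acc :: c)) (g (take n s))
    (reshape (nseq ((size s - n) %/ n.-1) n.-1) (drop n s)).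

Definition cond_b (I : interval R) (n : nat) (g : seq R -> R) : Prop :=
  forall s, strI I s -> inA n (size s) -> (n < size s)%N -> g s = nested_gn n g s.

Definition g1_idem (I : interval R) (n : nat) (g : seq R -> R) : Prop :=
  forall s, inIn I n s -> g [:: g s] = g s.

Definition cond_c (I : interval R) (n : nat) (g : seq R -> R) : Prop :=
  g1_idem I n g /\
  forall (x z : seq R) (y : R),
    inIn I n (x ++ y :: z) -> g (x ++ g [:: y] :: z) = g (x ++ y :: z).

Definition n_associative (I : interval R) (n : nat) (g : seq R -> R) : Prop :=
  [/\ gn_assoc I n g, cond_b I n g & cond_c I n g].

End Defs.

From HB Require Import structures.
From mathcomp Require Import all_boot all_order all_algebra.
From mathcomp Require Import reals.
From mathcomp Require Import zify.
Import Order.TTheory GRing.Theory Num.Theory.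

Set Implicit Arguments. Unset Strict Implicit. Unset Printing Implicit Defensive.

(* Under n-associativity g evaluates a string by folding g_n from the left, so
   g(s t) = g(g(s) t) for every admissible prefix s.  Any factor y can then be
   brought to the front of a window of length 2n - 1, where associativity of g_n
   applies, which shows (i) => (iii); conversely (iii) yields the folding formula,
   associativity of g_n and the absorption of g_1 at once, and (ii) is a symmetric
   restatement of (iii).  For (iii) <=> (iv), replace the factors of
   g(x_1 ... x_n) one at a time, and conversely isolate a factor y as one of n
   blocks, padding it with singleton blocks. *)

Lemma inA1 n : inA n 1.
Proof. by rewrite /inA /= eqxx. Qed.

Lemma inA_self d : inA d.+1 d.+1.
Proof. by rewrite /inA /= -addn1 modnDl. Qed.

Lemma inA_mulS d m : inA d.+1 (m * d).+1.
Proof. by rewrite /inA /= -addn1 modnMDl. Qed.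

Lemma inA_contract n k a c : inA n k -> inA n (a + k + c) = inA n (a + 1 + c).
Proof.
rewrite /inA => /andP[k_gt0 /eqP km].
have -> : (0 < a + k + c)%N by lia.
have -> : (a + k + c = k + (a + c))%N by lia.
have -> : (a + 1 + c = 1 + (a + c))%N by lia.
by rewrite /= -modnDml km modnDml.
Qed.

Lemma inA_shift d m : (0 < m)%N -> inA d.+1 (m + d) = inA d.+1 m.
Proof.
move=> m_gt0; have := inA_contract m.-1 0 (inA_self d).
have -> : (m.-1 + d.+1 + 0 = m + d)%N by lia.
by have -> : (m.-1 + 1 + 0 = m)%N by lia.
Qed.

Lemma inA_gap d a b c : inA d.+1 (a + b + c) -> inA d.+1 b -> (d %| a + c)%N.
Proof.
rewrite /inA /= => /andP[_ /eqP h] /andP[_ /eqP hb].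
have e : ((a + c) + b == 0 + b %[mod d])%N by rewrite add0n hb -h addnAC.
by rewrite eqn_modDr mod0n in e.
Qed.

Lemma split_outer (T : Type) (x z : seq T) k : (k <= size x + size z)%N ->
  exists l u v r, [/\ x = l ++ u, z = v ++ r & (size l + size r = k)%N].
Proof.
move=> hk; case: (leqP k (size x)) => hx.
  exists (take k x), (drop k x), z, [::]; rewrite cat_take_drop cats0 addn0.
  by rewrite size_takel.
exists x, [::], (take (size z - (k - size x)) z), (drop (size z - (k - size x)) z).
by rewrite cats0 cat_take_drop size_drop; split => //; lia.
Qed.

Section Strings.
Variables (R : realType) (I : interval R).

Lemma strI_cat s t : strI I (s ++ t) = strI I s && strI I t.
Proof. exact: all_cat. Qed.

Lemma strI_take k s : strI I s -> strI I (take k s).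
Proof. by rewrite -{1}(cat_take_drop k s) strI_cat => /andP[]. Qed.

Lemma strI_drop k s : strI I s -> strI I (drop k s).
Proof. by rewrite -{1}(cat_take_drop k s) strI_cat => /andP[]. Qed.

Lemma inIn_letter n a : inIn I n [:: a] = (a \in I).
Proof. by rewrite /inIn /strI /= inA1 !andbT. Qed.

Lemma inIn_sizen d s : size s = d.+1 -> inIn I d.+1 s = strI I s.
Proof. by rewrite /inIn => ->; rewrite inA_self andbT. Qed.

Lemma inIn_factor n x y z a : inIn I n y -> a \in I ->
  inIn I n (x ++ a :: z) = inIn I n (x ++ y ++ z).
Proof.
move=> /andP[sy ay] aI; rewrite /inIn !strI_cat sy /= aI !size_cat /=.
by rewrite addnA (inA_contract _ _ ay) addn1 addnS.
Qed.

Lemma inIn_factor_head n y z a : inIn I n y -> a \in I ->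
  inIn I n (a :: z) = inIn I n (y ++ z).
Proof. exact: (inIn_factor [::]). Qed.

Lemma inIn_size_cases d s : inIn I d.+1 s -> size s = 1%N \/ (d.+1 <= size s)%N.
Proof.
move=> /andP[_ As]; have s_gt0 : (0 < size s)%N by case/andP: As.
have dvd_s : (d %| (size s).-1 + 0)%N.
  by apply: (inA_gap (b := 1)) (inA1 _); rewrite addn0 addn1 prednK.
case: (posnP (size s).-1) => [?|pos]; [left; lia|right].
by rewrite addn0 in dvd_s; have := dvdn_leq pos dvd_s; lia.
Qed.

Lemma inIn_outer_size d x y z : inIn I d.+1 (x ++ y ++ z) -> inIn I d.+1 y ->
  (0 < size x + size z)%N -> (d <= size x + size z)%N.
Proof.
move=> /andP[_ A] /andP[_ Ay] pos; apply: dvdn_leq pos _.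
by apply: (inA_gap (b := size y)) Ay; rewrite -addnA -!size_cat.
Qed.

Lemma inIn_inner d l w r : (size l + size r = d)%N -> (0 < size w)%N ->
  inIn I d.+1 (l ++ w ++ r) -> inIn I d.+1 w.
Proof.
move=> slr w_gt0 /andP[]; rewrite !strI_cat /inIn => /and3P[_ -> _] /=.
by rewrite !size_cat -(inA_shift _ w_gt0); congr inA; lia.
Qed.

End Strings.

Definition left_reducible (R : realType) (I : interval R) n (g : seq R -> R) :=
  forall u v, inIn I n (u ++ v) -> size u = n -> v != [::] ->
  g (u ++ v) = g (g u :: v).

Definition factor_invariant (R : realType) (I : interval R) n (g : seq R -> R) :=
  forall x y z, inIn I n (x ++ y ++ z) -> inIn I n y ->
  g (x ++ g y :: z) = g (x ++ y ++ z).

Definition blockwise (R : realType) (I : interval R) n (g : seq R -> R) :=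
  forall xs, size xs = n -> all (inIn I n) xs -> g (map g xs) = g (flatten xs).

Lemma factor_invariant_idem (R : realType) (I : interval R) n g :
  factor_invariant I n g -> g1_idem I n g.
Proof. by move=> h3 s hs; have := h3 [::] s [::]; rewrite /= cats0; apply. Qed.

Section NestedEvaluation.
Variables (R : realType) (d : nat) (g : seq R -> R).
Hypothesis d_gt0 : (0 < d)%N.

Lemma nested_gn_cons k a t : size t = (k.+1 * d)%N ->
  nested_gn d.+1 g (a :: t) =
  foldl (fun acc c => g (acc :: c)) a (reshape (nseq k.+1 d) t).
Proof. by move=> st; rewrite /nested_gn /= subSS st mulSn addKn mulnK. Qed.

Lemma nested_gn_cat k u v : size u = d.+1 -> size v = (k.+1 * d)%N ->
  nested_gn d.+1 g (u ++ v) = nested_gn d.+1 g (g u :: v).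
Proof.
move=> su sv; rewrite (nested_gn_cons _ sv) /nested_gn take_size_cat //.
by rewrite drop_size_cat // size_cat su addKn sv mulnK.
Qed.

Lemma nested_gn_sizen s : size s = d.+1 -> nested_gn d.+1 g s = g s.
Proof. by move=> ss; rewrite /nested_gn ss subnn div0n take_oversize ?ss. Qed.

End NestedEvaluation.

Section NAssociative.
Variables (R : realType) (I : interval R) (d : nat) (g : seq R -> R).
Hypotheses (d_gt0 : (0 < d)%N) (g_into : maps_into I d.+1 g).
Local Notation n := d.+1.

Lemma inIn_suffix_size u v : inIn I n (u ++ v) -> size u = n -> v != [::] ->
  exists k, size v = (k.+1 * d)%N.
Proof.
move=> /andP[_ Auv] su v_nil.
have /dvdnP[[|k] sv] : (d %| size v)%N.
  have := @inA_gap d 0 (size u) (size v); rewrite add0n -size_cat su inA_self.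
  by apply.
- by move: v_nil; rewrite -size_eq0 sv.
- by exists k.
Qed.

Lemma cond_b_sizen : cond_b I n g ->
  forall s, inIn I n s -> (n <= size s)%N -> g s = nested_gn n g s.
Proof.
move=> hb s /andP[ss As]; rewrite leq_eqVlt => /orP[/eqP ns|]; last exact: hb.
by rewrite nested_gn_sizen.
Qed.

Lemma cond_b_left_reducible : cond_b I n g -> left_reducible I n g.
Proof.
move=> hb u v huv su v_nil; have [k sv] := inIn_suffix_size huv su v_nil.
have hu : inIn I n u by case/andP: huv; rewrite inIn_sizen // strI_cat => /andP[].
have hgu : inIn I n (g u :: v) by rewrite (inIn_factor_head _ hu (g_into hu)).
rewrite (cond_b_sizen hb huv) ?size_cat ?su ?leq_addr // (nested_gn_cat _ _ su sv) //.
by rewrite -cond_b_sizen //= sv ltnS mulSn leq_addr.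
Qed.

Lemma left_reducible_cond_b : left_reducible I n g -> cond_b I n g.
Proof.
move=> hr; suff hge s : inIn I n s -> (n <= size s)%N -> g s = nested_gn n g s.
  by move=> s ss As /ltnW; apply: hge; rewrite /inIn ss.
have [N] := ubnP (size s); elim: N s => // N IH s /ltnSE hN hs.
rewrite leq_eqVlt => /orP[/eqP ns|lt_ns]; first by rewrite nested_gn_sizen.
set u := take n s; set v := drop n s.
have su : size u = n by rewrite size_takel // ltnW.
have v_nil : v != [::] by rewrite -size_eq0 size_drop subn_eq0 -ltnNge.
have huv : inIn I n (u ++ v) by rewrite cat_take_drop.
have hu : inIn I n u by rewrite inIn_sizen // strI_take //; case/andP: hs.
have [k sv] := inIn_suffix_size huv su v_nil.
rewrite -(cat_take_drop n s) -/u -/v (hr _ _ huv su v_nil) (nested_gn_cat _ _ su sv) //.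
apply: IH; last by rewrite /= sv mulSn; lia.
- by move: hN; rewrite -(cat_take_drop n s) size_cat /= -/u -/v su; lia.
- by rewrite (inIn_factor_head _ hu (g_into hu)).
Qed.

Lemma left_absorb : cond_c I n g -> left_reducible I n g ->
  forall s t, inIn I n s -> inIn I n (s ++ t) -> g (s ++ t) = g (g s :: t).
Proof.
move=> [idem letter] hr s t.
have [N] := ubnP (size s); elim: N s t => // N IH s t /ltnSE hN hs hst.
have [s1|ge_ns] := inIn_size_cases hs.
  by case: s s1 hst {hN hs} => [|a []] // _ hat; rewrite (letter [::] t a).
have [->|t_nil] := eqVneq t [::]; first by rewrite cats0 idem.
set u := take n s; set w := drop n s.
have es : s = u ++ w by rewrite cat_take_drop.
have su : size u = n by rewrite size_takel.
have hu : inIn I n u by rewrite inIn_sizen // strI_take //; case/andP: hs.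
have hgu := g_into hu.
have wt_nil : w ++ t != [::].
  by move: t_nil; rewrite -!size_eq0 size_cat addn_eq0 negb_and => ->; rewrite orbT.
rewrite es -catA (hr _ _ _ su wt_nil); last by rewrite catA -es.
have [ew|w_nil] := eqVneq w [::]; first by rewrite ew cats0.
rewrite (hr _ _ _ su w_nil) -?es // -(IH (g u :: w)) //.
- by move: hN; rewrite es size_cat su /=; lia.
- by rewrite (inIn_factor_head _ hu hgu) -es.
- by rewrite cat_cons (inIn_factor_head _ hu hgu) catA -es.
Qed.

Section FromNAssociative.
Hypothesis hA : n_associative I n g.

Lemma n_assoc_absorb s t : inIn I n s -> inIn I n (s ++ t) ->
  g (s ++ t) = g (g s :: t).
Proof. by case: hA => _ hb hc; apply: (left_absorb hc (cond_b_left_reducible hb)). Qed.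

Lemma n_assoc_factor_short x y z : size y = n -> (0 < size x < n)%N ->
  inIn I n (x ++ y ++ z) -> g (x ++ g y :: z) = g (x ++ y ++ z).
Proof.
move=> sy /andP[x_gt0 lt_xn] hin; case: hA => assoc _ _.
have /and3P[sx syI sz] : [&& strI I x, strI I y & strI I z].
  by case/andP: hin; rewrite !strI_cat.
have hy : inIn I n y by rewrite inIn_sizen.
have hgy := g_into hy.
have ge_dxz : (d <= size x + size z)%N.
  by apply: (inIn_outer_size hin hy); rewrite addn_gt0 x_gt0.
(* Pad x y to a window of length 2n - 1, where g_n moves the bracket to the front. *)
set z1 := take (d - size x) z; set r := drop (d - size x) z.
have ez : z = z1 ++ r by rewrite cat_take_drop.
have sz1 : size z1 = (d - size x)%N by rewrite size_takel // leq_subLR.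
set w := x ++ y ++ z1; set y' := take n w; set z' := drop n w.
have ew : w = y' ++ z' by rewrite cat_take_drop.
have sw : size w = (n + d)%N by rewrite !size_cat sy sz1 addnCA subnKC.
have sy' : size y' = n by rewrite size_takel // sw leq_addr.
have sz' : size z' = d by rewrite size_drop sw addKn.
have sI_w : strI I w by rewrite !strI_cat sx syI strI_take.
have hy' : inIn I n y' by rewrite inIn_sizen ?strI_take.
have hgy' := g_into hy'.
have hu : inIn I n (x ++ g y :: z1).
  by rewrite inIn_sizen ?strI_cat ?sx /= ?hgy ?strI_take // size_cat /= sz1 addnS subnKC.
have assoc_w : g (x ++ g y :: z1) = g ([::] ++ g y' :: z').
  apply: (assoc x y z1 [::] y' z' sI_w _ sy sy' ew).
  by rewrite sw mul2n -addnn addnS subn1.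
have -> : x ++ g y :: z = (x ++ g y :: z1) ++ r by rewrite -catA /= -ez.
have exyz : x ++ y ++ z = y' ++ z' ++ r by rewrite [y' ++ _]catA -ew /w ez -!catA.
rewrite exyz in hin *.
rewrite n_assoc_absorb ?assoc_w //; last first.
  by rewrite -catA /= -ez (inIn_factor x z hy hgy) exyz.
have hgz : inIn I n (g y' :: z') by rewrite inIn_sizen /= ?sz' // hgy' strI_drop.
have hgzr : inIn I n (g y' :: z' ++ r) by rewrite (inIn_factor_head _ hy' hgy').
by rewrite -(n_assoc_absorb hgz) // (n_assoc_absorb hy').
Qed.

Lemma n_assoc_factor_sizen x y z : size y = n -> inIn I n (x ++ y ++ z) ->
  g (x ++ g y :: z) = g (x ++ y ++ z).
Proof.
move=> sy; have [N] := ubnP (size x); elim: N x => // N IH x /ltnSE hN hin.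
have hy : inIn I n y.
  by rewrite inIn_sizen //; case/andP: hin; rewrite !strI_cat => /and3P[].
have [ex|x_nil] := eqVneq x [::].
  by rewrite ex /= in hin *; rewrite (n_assoc_absorb hy).
case: (leqP n (size x)) => [ge_nx|lt_xn]; last first.
  by apply: n_assoc_factor_short; rewrite // lt_xn lt0n size_eq0 x_nil.
set x1 := take n x; set x2 := drop n x.
have ex : x = x1 ++ x2 by rewrite cat_take_drop.
have sx1 : size x1 = n by rewrite size_takel.
have hx1 : inIn I n x1.
  by rewrite inIn_sizen // strI_take //; case/andP: hin; rewrite strI_cat => /andP[].
have hgx1 := g_into hx1.
have absorb_x1 t : inIn I n (x ++ t) -> g (x ++ t) = g (g x1 :: x2 ++ t).
  by move=> ht; rewrite ex -catA n_assoc_absorb // catA -ex.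
rewrite !absorb_x1 ?(inIn_factor x z hy (g_into hy)) //.
apply: (IH (g x1 :: x2)).
  by apply: leq_trans hN; rewrite ex size_cat sx1 /= addSn ltnS -add1n leq_add2r.
by rewrite cat_cons (inIn_factor_head _ hx1 hgx1) catA -ex.
Qed.

Lemma n_assoc_factor_invariant : factor_invariant I n g.
Proof.
have [_ hb [_ letter]] := hA.
have lr := cond_b_left_reducible hb.
move=> x y z; have [N] := ubnP (size y); elim: N y => // N IH y /ltnSE hN hin hy.
have [y1|ge_ny] := inIn_size_cases hy.
  by case: y y1 hin hy {hN} => [|a []] // _ hin _; rewrite (letter x z a).
set u := take n y; set v := drop n y.
have ey : y = u ++ v by rewrite cat_take_drop.
have su : size u = n by rewrite size_takel.
have hu : inIn I n u by rewrite inIn_sizen // strI_take //; case/andP: hy.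
have hgu := g_into hu.
have hxuv : inIn I n (x ++ u ++ v ++ z) by rewrite [u ++ _]catA -ey.
have [ev|v_nil] := eqVneq v [::].
  by apply: n_assoc_factor_sizen; rewrite // ey ev cats0.
have -> : g y = g (g u :: v) by rewrite {1}ey lr // -ey.
rewrite (IH (g u :: v)).
- by rewrite ey -catA (n_assoc_factor_sizen su).
- by move: hN; rewrite ey size_cat su /=; lia.
- by rewrite cat_cons (inIn_factor x (v ++ z) hu hgu).
- by rewrite (inIn_factor_head _ hu hgu) -ey.
Qed.

End FromNAssociative.

Lemma factor_invariant_left_reducible : factor_invariant I n g -> left_reducible I n g.
Proof.
move=> h3 u v huv su _; rewrite (h3 [::] u v) //.
by rewrite inIn_sizen //; case/andP: huv; rewrite strI_cat => /andP[].
Qed.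

Lemma factor_invariant_n_assoc : factor_invariant I n g -> n_associative I n g.
Proof.
move=> h3; split.
- move=> x y z x' y' z' sI sxyz sy sy' e.
  have A : inA n (size (x ++ y ++ z)).
    by rewrite sxyz (_ : (2 * n - 1 = (2 * d).+1)%N) ?inA_mulS //; lia.
  have hy : inIn I n y.
    by rewrite inIn_sizen //; move: sI; rewrite !strI_cat => /and3P[].
  have hy' : inIn I n y'.
    by rewrite inIn_sizen //; move: sI; rewrite e !strI_cat => /and3P[].
  by rewrite h3 /inIn ?sI ?A // e h3 // /inIn -e sI A.
- exact/left_reducible_cond_b/factor_invariant_left_reducible.
- split; first exact: factor_invariant_idem.
  move=> x z a hin; apply: h3 => //; rewrite inIn_letter.
  by case/andP: hin; rewrite strI_cat => /andP[_ /andP[]].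
Qed.

Lemma inIn_flatten_map p xs q : all (inIn I n) xs ->
  inIn I n (p ++ flatten xs ++ q) = inIn I n (p ++ map g xs ++ q).
Proof.
elim: xs p => [//|x xs IH] p /= /andP[hx hxs].
by rewrite -catA -(inIn_factor p _ hx (g_into hx)) -cat_rcons IH // cat_rcons.
Qed.

Lemma factor_invariant_map : factor_invariant I n g ->
  forall p xs q, all (inIn I n) xs -> inIn I n (p ++ flatten xs ++ q) ->
  g (p ++ map g xs ++ q) = g (p ++ flatten xs ++ q).
Proof.
move=> h3 p xs q; elim: xs p => [//|x xs IH] p /= /andP[hx hxs].
rewrite -catA => hin; rewrite -cat_rcons IH // cat_rcons ?h3 //.
by rewrite (inIn_factor p _ hx (g_into hx)).
Qed.

Lemma factor_invariant_blockwise : factor_invariant I n g -> blockwise I n g.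
Proof.
move=> h3 xs sxs hxs; have := factor_invariant_map h3 (p := [::]) (q := [::]) hxs.
rewrite /= !cats0; apply; have := inIn_flatten_map [::] [::] hxs.
rewrite /= !cats0 => ->; rewrite inIn_sizen ?size_map // /strI all_map.
by apply/allP => x hx /=; apply/g_into/(allP hxs).
Qed.

Lemma blockwise_factor_invariant : g1_idem I n g -> blockwise I n g ->
  factor_invariant I n g.
Proof.
move=> idem h4 x y z; have [N] := ubnP (size x + size z).
elim: N x z => // N IH x z /ltnSE hN hin hy.
have [xz0|xz_pos] := posnP (size x + size z).
  move: xz0 hin => /eqP; rewrite addn_eq0 !size_eq0 => /andP[/eqP-> /eqP->].
  by rewrite /= cats0 idem.
have [l [u [v [r [ex ez slr]]]]] := split_outer (inIn_outer_size hin hy xz_pos).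
have /and3P[sl _ sr] : [&& strI I l, strI I (u ++ y ++ v) & strI I r].
  by case/andP: hin; rewrite ex ez !strI_cat -!andbA.
pose single := map (fun a : R => [:: a]).
have step w : inIn I n w ->
    g (l ++ w ++ r) = g (map g (single l) ++ g w :: map g (single r)).
  move=> hw; have -> : l ++ w ++ r = flatten (single l ++ w :: single r).
    by rewrite flatten_cat /= !flatten_seq1.
  rewrite -h4 ?map_cat // ?size_cat /= ?size_map; first lia.
  by rewrite all_cat /= hw !all_map; apply/andP; split; apply/allP => a ha /=;
     rewrite inIn_letter; [exact: (allP sl) | exact: (allP sr)].
have y_gt0 : (0 < size y)%N by case/andP: hy => _ /andP[].
have huyv : inIn I n (u ++ y ++ v).
  apply: (inIn_inner slr); first by rewrite !size_cat; lia.
  by move: hin; rewrite ex ez -!catA.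
have hugv : inIn I n (u ++ g y :: v) by rewrite (inIn_factor u v hy (g_into hy)).
have -> : x ++ g y :: z = l ++ (u ++ g y :: v) ++ r by rewrite ex ez -!catA.
have -> : x ++ y ++ z = l ++ (u ++ y ++ v) ++ r by rewrite ex ez -!catA.
rewrite !step ?(IH u v) //.
by move: hN; rewrite ex ez !size_cat; lia.
Qed.

End NAssociative.

Theorem proposition2p5 (R : realType) (I : interval R) (n : nat)
  (g : seq R -> R) :
  nontrivial_itv I -> (2 <= n)%N -> maps_into I n g ->
  [<-> n_associative I n g;
       g1_idem I n g /\
       (forall x y z x' y' z' : seq R,
          inIn I n (x ++ y ++ z) -> inIn I n (x' ++ y' ++ z') ->
          inIn I n y -> inIn I n y' ->
          x ++ y ++ z = x' ++ y' ++ z' ->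
          g (x ++ g y :: z) = g (x' ++ g y' :: z'));
       (forall x y z : seq R,
          inIn I n (x ++ y ++ z) -> inIn I n y ->
          g (x ++ g y :: z) = g (x ++ y ++ z));
       g1_idem I n g /\
       (forall xs : seq (seq R),
          size xs = n -> all (inIn I n) xs ->
          g (map g xs) = g (flatten xs))].
Proof.
move=> _; case: n => [|d] //; rewrite ltnS => d_gt0 g_into.
tfae.
- move=> /(n_assoc_factor_invariant d_gt0 g_into) h3.
  split; first exact: factor_invariant_idem.
  by move=> x y z x' y' z' hin hin' hy hy' e; rewrite h3 // e h3.
- move=> [idem h2] x y z hin hy.
  by rewrite (h2 x y z [::] (x ++ y ++ z) [::]) ?cats0 //= idem.
- move=> h3; split; first exact: factor_invariant_idem.
  exact: factor_invariant_blockwise.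
- move=> [idem h4]; apply: (factor_invariant_n_assoc d_gt0 g_into).
  exact: blockwise_factor_invariant.
Qed.
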